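(* Let $\psi$ be an injective map from the positive integers to the positive integers and let $A=\{\psi(n): n\ge 1\}$. Let $\alpha$ be a positive integer. Define $\Gamma^{\psi}_{\alpha}(0)=1$ and, for a positive integer $m$, \[ \Gamma^{\psi}_{\alpha}(m)=\sum_{(N_0,N_1,N_2,\dots)}\ \prod_{j\ge0}\bar{p}^{A}(N_j), \] the sum running over all sequences of nonnegative integers $(N_0,N_1,\dots)$ with $m=(\alpha+1)\sum_{i\ge0}2^{i}N_i$ (so $\Gamma^{\psi}_{\alpha}(m)=0$ if there is no such sequence). Then for every nonnegative integer $n$, \[ p^{A}_{\alpha}(n)=\sum_{i=0}^{n}p^{A}(n-i)\,\Gamma^{\psi}_{\alpha}(i). \]
   Context: For a set $A$ of positive integers and a positive integer $\alpha$, $p^{A}_{\alpha}(n)$ is the number of partitions of $n$ into parts from $A$ in which each part occurs at most $\alpha$ times, and $p^{A}(n)$ is the number of partitions of $n$ into parts from $A$ without restriction; $p^{A}_{\alpha}(0)=p^{A}(0)=1$. Further $\bar{p}^{A}(n)=E^{A}(n)-O^{A}(n)$, where $E^{A}(n)$ (resp. $O^{A}(n)$) is the number of partitions of $n$ into parts from $A$ (no restriction on multiplicities) with an even (resp. odd) number of parts, and $\bar{p}^{A}(0)=1$. *)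

From mathcomp Require Import all_boot all_order all_algebra.
From mathcomp Require Import boolp.
Local Open Scope ring_scope.
Import Order.TTheory GRing.Theory Num.Theory.

Definition inA (psi : nat -> nat) (k : nat) : Prop :=
  exists j : nat, (0 < j)%N /\ psi j = k.

(* A partition of n is encoded by its multiplicity function f : part k |-> f k,
   for parts k in {0,...,n} (each multiplicity is at most n). *)
Definition mset (n : nat) := {ffun 'I_n.+1 -> 'I_n.+1}.

Definition is_partA (psi : nat -> nat) (n : nat) (f : mset n) : Prop :=
  (nat_of_ord (f ord0) = 0%N) /\
  (forall k : 'I_n.+1, ~ inA psi k -> nat_of_ord (f k) = 0%N) /\
  (\sum_(k < n.+1) k * f k)%N = n.

Definition nparts n (f : mset n) : nat := (\sum_(k < n.+1) f k)%N.

Definition pA (psi : nat -> nat) (n : nat) : nat :=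
  #|[set f : mset n | `[< is_partA psi n f >] ]|.

Definition pA_alpha (psi : nat -> nat) (alpha n : nat) : nat :=
  #|[set f : mset n | `[< is_partA psi n f /\ forall k : 'I_n.+1, (nat_of_ord (f k) <= alpha)%N >] ]|.

Definition pbarA (psi : nat -> nat) (n : nat) : int :=
  \sum_(f : mset n | `[< is_partA psi n f >]) (-1) ^+ nparts n f.

(* For m > 0, a sequence (N_0, N_1, ...) with
   m = (alpha+1) sum_i 2^i N_i has N_i = 0 for i >= m (as 2^m > m) and
   N_i <= m, and contributes pbar(0) = 1 for the zero entries; so it is
   encoded by the finite function N : 'I_m -> 'I_m.+1. *)
Definition Gamma (psi : nat -> nat) (alpha m : nat) : int :=
  if m == 0%N then 1 else
  \sum_(N : {ffun 'I_m -> 'I_m.+1} |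
          (alpha.+1 * \sum_(i < m) 2 ^ i * N i)%N == m)
     \prod_(i < m) pbarA psi (N i).

(* Work modulo X^(n+1), i.e. with generating functions truncated at degree n.
   The generating function of p^A_alpha is prod_(k in A) (1 - q^((alpha+1)k)) / (1 - q^k),
   i.e. that of p^A times prod_(k in A) (1 - q^((alpha+1)k)).  By Euler's identity
   1 / (1 - Y) = prod_(i >= 0) (1 + Y^(2^i)), each factor 1 - Y with Y = q^((alpha+1)k) is
   prod_i 1 / (1 + Y^(2^i)).  As prod_(k in A) 1 / (1 + x^k) generates pbar^A, the whole
   product is prod_i Pbar(q^((alpha+1) 2^i)), whose coefficients are the Gamma(m). *)

From mathcomp Require Import all_boot all_order all_algebra.
From mathcomp Require Import boolp.
From mathcomp Require Import ring zify.
Import Order.TTheory GRing.Theory Num.Theory.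
Local Open Scope ring_scope.

Section GeometricIdentities.

Variable R : comPzRingType.
Implicit Types x : R.

Lemma mulr_one_sub_geom x L : (1 - x) * \sum_(t < L) x ^+ t = 1 - x ^+ L.
Proof. by rewrite -opprB mulNr -subrX1 opprB. Qed.

Lemma mulr_one_sub_prod_one_add_expr2 x L :
  (1 - x) * \prod_(i < L) (1 + x ^+ (2 ^ i)) = 1 - x ^+ (2 ^ L).
Proof.
elim: L => [|L IHL]; first by rewrite big_ord0 mulr1 expr1.
by rewrite big_ord_recr /= mulrA IHL expnSr exprM; ring.
Qed.

Lemma geom_sum_mul_one_sub_expr x M c :
  (\sum_(t < M) x ^+ t) * (1 - x ^+ c) = (\sum_(t < c) x ^+ t) * (1 - x ^+ M).
Proof.
have geom_c := mulr_one_sub_geom x c.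
elim: M => [|M IHM]; first by rewrite big_ord0 expr0 subrr mul0r mulr0.
by rewrite big_ord_recr /= mulrDl IHM -geom_c exprS; ring.
Qed.

End GeometricIdentities.

Definition eqmodX {R : nzRingType} (m : nat) (p q : {poly R}) :=
  forall i, (i <= m)%N -> p`_i = q`_i.

Notation "p = q %[modX m ]" := (eqmodX m p q)
  (at level 70, q at next level, format "p  =  q  %[modX  m ]") : ring_scope.

Section TruncatedPolynomials.

Context {R : comNzRingType}.
Implicit Types (p q r y : {poly R}) (m : nat).

Lemma eqmodX_refl {m p} : p = p %[modX m].
Proof. by []. Qed.

Lemma eqmodX_sym {m p q} : p = q %[modX m] -> q = p %[modX m].
Proof. by move=> Epq i /Epq. Qed.

Lemma eqmodX_trans {m} q {p r} : p = q %[modX m] -> q = r %[modX m] -> p = r %[modX m].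
Proof. by move=> Epq Eqr i lim; rewrite Epq // Eqr. Qed.

Lemma eqmodXD {m p q r} {s : {poly R}} :
  p = q %[modX m] -> r = s %[modX m] -> p + r = q + s %[modX m].
Proof. by move=> Epq Ers i lim; rewrite !coefD Epq // Ers. Qed.

Lemma eqmodXN {m p q} : p = q %[modX m] -> - p = - q %[modX m].
Proof. by move=> Epq i lim; rewrite !coefN Epq. Qed.

Lemma eqmodXM {m p q r} {s : {poly R}} :
  p = q %[modX m] -> r = s %[modX m] -> p * r = q * s %[modX m].
Proof.
move=> Epq Ers i lim; rewrite !coefM; apply: eq_bigr => j _.
rewrite Epq ?Ers //; first exact: leq_trans (leq_subr _ _) lim.
by rewrite (leq_trans _ lim) // -ltnS.
Qed.

Lemma eqmodX_sum {m} {I : Type} {xs : seq I} {P : pred I} {F G : I -> {poly R}} :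
  (forall i, P i -> F i = G i %[modX m]) ->
  \sum_(i <- xs | P i) F i = \sum_(i <- xs | P i) G i %[modX m].
Proof. by move=> EFG; apply: big_ind2 => // *; exact: eqmodXD. Qed.

Lemma eqmodX_prod {m} {I : Type} {xs : seq I} {P : pred I} {F G : I -> {poly R}} :
  (forall i, P i -> F i = G i %[modX m]) ->
  \prod_(i <- xs | P i) F i = \prod_(i <- xs | P i) G i %[modX m].
Proof. by move=> EFG; apply: big_ind2 => // *; exact: eqmodXM. Qed.

Lemma eqmodX_sum0 {m} {I : Type} {xs : seq I} {P : pred I} {F : I -> {poly R}} :
  (forall i, P i -> F i = 0 %[modX m]) -> \sum_(i <- xs | P i) F i = 0 %[modX m].
Proof.
move=> F0; apply: (eqmodX_trans (\sum_(i <- xs | P i) 0)); first exact: eqmodX_sum.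
by rewrite big1_eq.
Qed.

Lemma eqmodX_prod1 {m} {I : Type} {xs : seq I} {P : pred I} {F : I -> {poly R}} :
  (forall i, P i -> F i = 1 %[modX m]) -> \prod_(i <- xs | P i) F i = 1 %[modX m].
Proof.
move=> F1; apply: (eqmodX_trans (\prod_(i <- xs | P i) 1)); first exact: eqmodX_prod.
by rewrite big1_eq.
Qed.

Lemma eqmodX_Xn0 m d : (m < d)%N -> ('X^d : {poly R}) = 0 %[modX m].
Proof. by move=> lt_md i lim; rewrite coefXn coef0 (ltn_eqF (leq_ltn_trans lim lt_md)). Qed.

Lemma eqmodX_mull0 {m p} q : p = 0 %[modX m] -> q * p = 0 %[modX m].
Proof. by move=> Ep; rewrite -(mulr0 q); exact: eqmodXM. Qed.

Lemma eqmodX_expr0 {m y M} N :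
  y ^+ M = 0 %[modX m] -> (M <= N)%N -> y ^+ N = 0 %[modX m].
Proof. by move=> EyM le_MN; rewrite -(subnK le_MN) exprD; exact: eqmodX_mull0. Qed.

Lemma eqmodX_comp m d p q :
  (0 < d)%N -> p = q %[modX m] -> p \Po 'X^d = q \Po 'X^d %[modX m].
Proof.
move=> d_gt0 Epq i lim; rewrite !coef_comp_poly_Xn //; case: ifP => // _.
by rewrite Epq // (leq_trans _ lim) // leq_div.
Qed.

Lemma eqmodX_trunc m p : p = \sum_(s < m.+1) (p`_s)%:P * 'X^s %[modX m].
Proof.
under eq_bigr do rewrite mul_polyC.
by rewrite -poly_def => i lim; rewrite coef_poly ltnS lim.
Qed.

Lemma eqmodX_sum_widen m J1 J2 (F : nat -> {poly R}) : (J1 <= J2)%N ->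
  (forall t, (J1 <= t < J2)%N -> F t = 0 %[modX m]) ->
  \sum_(t < J2) F t = \sum_(t < J1) F t %[modX m].
Proof.
move=> le_J12 F0; rewrite (big_ord_widen _ _ le_J12).
rewrite [X in X = _ %[modX m]](bigID (fun t : 'I_J2 => (t < J1)%N)) /=.
rewrite -[X in _ = X %[modX m]]addr0; apply: eqmodXD; first exact: eqmodX_refl.
apply: eqmodX_sum0 => t.
by rewrite -leqNgt => le_J1t; apply: F0; rewrite le_J1t ltn_ord.
Qed.

Lemma eqmodX_prod_widen m J1 J2 (F : nat -> {poly R}) : (J1 <= J2)%N ->
  (forall t, (J1 <= t < J2)%N -> F t = 1 %[modX m]) ->
  \prod_(t < J2) F t = \prod_(t < J1) F t %[modX m].
Proof.
move=> le_J12 F1; rewrite (big_ord_widen _ _ le_J12).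
rewrite [X in X = _ %[modX m]](bigID (fun t : 'I_J2 => (t < J1)%N)) /=.
rewrite -[X in _ = X %[modX m]]mulr1; apply: eqmodXM; first exact: eqmodX_refl.
apply: eqmodX_prod1 => t.
by rewrite -leqNgt => le_J1t; apply: F1; rewrite le_J1t ltn_ord.
Qed.

Lemma eqmodX_prod_sum_narrow m I1 I2 L1 L2 (F : nat -> nat -> {poly R}) :
  (I1 <= I2)%N -> (0 < L1 <= L2)%N -> (forall i, F i 0%N = 1) ->
  (forall i s, (I1 <= i)%N || (L1 <= s)%N -> (0 < s)%N -> F i s = 0 %[modX m]) ->
  \prod_(i < I2) \sum_(s < L2) F i s = \prod_(i < I1) \sum_(s < L1) F i s %[modX m].
Proof.
move=> le_I12 /andP[L1_gt0 le_L12] F_0 F_big.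
apply: (eqmodX_trans (\prod_(i < I2) \sum_(s < L1) F i s)).
  apply: eqmodX_prod => i _; apply: eqmodX_sum_widen => // s /andP[le_L1s _].
  by apply: F_big; [rewrite le_L1s orbT | exact: leq_trans le_L1s].
apply: (@eqmodX_prod_widen _ _ _ (fun i => \sum_(s < L1) F i s)) => // i /andP[le_I1i _].
apply: eqmodX_trans _ (@eqmodX_sum_widen _ 1 _ (F i) L1_gt0 _) _ => [s /andP[s_gt0 _]|].
  by apply: F_big; rewrite ?le_I1i.
by rewrite big_ord1 F_0; exact: eqmodX_refl.
Qed.

Lemma geom_sum_mul_one_sub_eqmodX {m y M} c : y ^+ M = 0 %[modX m] ->
  (\sum_(t < M) y ^+ t) * (1 - y ^+ c) = \sum_(t < M | (t < c)%N) y ^+ t %[modX m].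
Proof.
move=> yM0; rewrite geom_sum_mul_one_sub_expr mulrBr mulr1 -[X in _ = X %[modX m]]subr0.
apply: eqmodXD; last exact/eqmodXN/eqmodX_mull0.
have [le_cM | lt_Mc] := leqP c M; first by rewrite -big_ord_widen //; exact: eqmodX_refl.
rewrite [X in _ = X %[modX m]](eq_bigl xpredT) => [|t /=]; last first.
  exact: ltn_trans (ltn_ord t) lt_Mc.
apply: (@eqmodX_sum_widen _ _ _ (fun t => y ^+ t)) => [|t /andP[le_Mt _]]; first exact: ltnW.
exact: eqmodX_expr0 yM0 le_Mt.
Qed.

Lemma one_sub_eqmodX_binary_prod m y M : y ^+ M = 0 %[modX m] ->
  1 - y = \prod_(i < M) \sum_(t < M) (- y ^+ (2 ^ i)) ^+ t %[modX m].
Proof.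
move=> yM0.
have inv_i i : (1 + y ^+ (2 ^ i)) * \sum_(t < M) (- y ^+ (2 ^ i)) ^+ t = 1 %[modX m].
  rewrite -{1}[y ^+ (2 ^ i)]opprK mulr_one_sub_geom -[X in _ = X %[modX m]]subr0.
  apply: eqmodXD; first exact: eqmodX_refl.
  apply: eqmodXN.
  rewrite exprNn -exprM; apply: eqmodX_mull0; apply: (eqmodX_expr0 _ yM0).
  by rewrite leq_pmull // expn_gt0.
apply: (eqmodX_trans ((1 - y) *
  \prod_(i < M) ((1 + y ^+ (2 ^ i)) * \sum_(t < M) (- y ^+ (2 ^ i)) ^+ t))).
  rewrite -[X in X = _ %[modX m]]mulr1; apply: eqmodXM; first exact: eqmodX_refl.
  by apply/eqmodX_sym/eqmodX_prod1 => i _; exact: inv_i.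
rewrite big_split /= mulrA mulr_one_sub_prod_one_add_expr2 mulrBl mul1r.
rewrite -[X in _ = X %[modX m]]subr0; apply: eqmodXD; first exact: eqmodX_refl.
apply: eqmodXN.
rewrite mulrC; apply: eqmodX_mull0; apply: (eqmodX_expr0 _ yM0).
exact/ltnW/ltn_expl.
Qed.

End TruncatedPolynomials.

Lemma prodr_natb (R : comPzSemiRingType) (I : finType) (b : pred I) :
  \prod_(i : I) ((b i)%:R : R) = [forall i, b i]%:R.
Proof.
have [/forallP b_all | /forallPn[i nbi]] := boolP [forall i, b i].
  by rewrite big1 // => i _; rewrite b_all.
by rewrite (bigD1 i) //= (negbTE nbi) mul0r.
Qed.

Lemma coef_prod_sum (R : comNzRingType) (I J : finType) (a : I -> J -> R)
    (d : I -> J -> nat) n :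
  (\prod_(i : I) \sum_(j : J) (a i j)%:P * 'X^(d i j))`_n =
  \sum_(f : {ffun I -> J}) (\prod_i a i (f i)) * ((\sum_i d i (f i))%N == n)%:R.
Proof.
rewrite bigA_distr_bigA coef_sum; apply: eq_bigr => f _.
by rewrite big_split /= -rmorph_prod prodrXr coefCM coefXn eq_sym.
Qed.

Section MultiplicityGeneratingFunction.

Context {R : comNzRingType}.
Variable w : nat -> nat -> R.

Definition mult_gf n k : {poly R} := \sum_(t < n.+1) (w k t)%:P * 'X^(k * t).

Definition part_gf n : {poly R} := \prod_(k < n.+1) mult_gf n k.

Lemma coef_part_gf n : (part_gf n)`_n =
  \sum_(f : mset n) (\prod_(k < n.+1) w k (f k)) * ((\sum_(k < n.+1) k * f k)%N == n)%:R.
Proof. exact: coef_prod_sum. Qed.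

Hypotheses (w_mult0 : forall k, w k 0%N = 1) (w_part0 : forall t, (0 < t)%N -> w 0%N t = 0).

Lemma part_gf_eqmodX j n : (j <= n)%N -> part_gf n = part_gf j %[modX j].
Proof.
move=> le_jn.
apply: (@eqmodX_prod_sum_narrow _ _ _ _ _ _ (fun k t => (w k t)%:P * 'X^(k * t)))
  => [//|//|k|k t big_kt t_gt0]; first by rewrite w_mult0 muln0 mulr1.
have [-> | k_gt0] := posnP k.
  by rewrite w_part0 // mul0r; exact: eqmodX_refl.
by apply/eqmodX_mull0/eqmodX_Xn0; move: big_kt; nia.
Qed.

End MultiplicityGeneratingFunction.

Arguments part_gf_eqmodX {R w} w_mult0 w_part0 {j n}.

Section PartitionsInA.

Variable psi : nat -> nat.

(* Part 0 is excluded even when psi hits 0, as [is_partA] forces its multiplicity to be 0. *)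
Definition memA k : bool := (0 < k)%N && `[< inA psi k >].

Definition weight (g : nat -> int) k t : int := ((t == 0)%N || memA k)%:R * g t.

Local Notation plain_weight := (weight (fun=> 1)).
Local Notation bounded_weight alpha := (weight (fun t => (t <= alpha)%N%:R)).
Local Notation signed_weight := (weight (fun t => (-1) ^+ t)).

Lemma weight_mult0 {g} : g 0%N = 1 -> forall k, weight g k 0 = 1.
Proof. by move=> g0 k; rewrite /weight g0 mulr1. Qed.

Lemma weight_part0 g t : (0 < t)%N -> weight g 0 t = 0.
Proof. by move=> t_gt0; rewrite /weight /memA (gtn_eqF t_gt0) mul0r. Qed.

Lemma is_partAE n (f : mset n) : `[< is_partA psi n f >] =
  [forall k, (f k == 0 :> nat) || memA k] && ((\sum_(k < n.+1) k * f k)%N == n).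
Proof.
apply/asboolP/andP => [[f0 [fA fsum]] | [/forallP fA /eqP fsum]].
  split; last exact/eqP.
  apply/forallP => k; rewrite /memA; case: (posnP k) => [k0 | k_gt0].
    by rewrite (_ : k = ord0) ?f0 //; exact: val_inj.
  by case: (asboolP (inA psi k)) => [|/fA ->]; rewrite ?k_gt0 ?orbT.
split; [|split] => //.
  by have := fA ord0; rewrite /memA ltnn orbF => /eqP.
by move=> k nAk; have := fA k; rewrite /memA (introF (asboolP _) nAk) andbF orbF => /eqP.
Qed.

Lemma coef_part_gf_weight g n : (part_gf (weight g) n)`_n =
  \sum_(f : mset n | `[< is_partA psi n f >]) \prod_(k < n.+1) g (f k).
Proof.
rewrite coef_part_gf [RHS]big_mkcond; apply: eq_bigr => f _.
rewrite big_split /= prodr_natb is_partAE.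
by case: [forall _, _]; case: (_ == _); rewrite ?mul1r ?mulr1 ?mul0r ?mulr0.
Qed.

Lemma pA_coef n : (pA psi n)%:Z = (part_gf plain_weight n)`_n.
Proof.
rewrite coef_part_gf_weight /pA -sum1dep_card -natz natr_sum.
by under [RHS]eq_bigr do rewrite big1_eq.
Qed.

Lemma pA_alpha_coef alpha n :
  (pA_alpha psi alpha n)%:Z = (part_gf (bounded_weight alpha) n)`_n.
Proof.
rewrite coef_part_gf_weight /pA_alpha -sum1dep_card -natz natr_sum.
rewrite [LHS](eq_bigl (fun f => `[< is_partA psi n f >] && [forall k, (f k <= alpha)%N]))
  => [|f].
  by rewrite big_mkcondr /=; apply: eq_bigr => f _; rewrite prodr_natb; case: [forall _, _].
by rewrite asbool_and; congr (_ && _); apply/asboolP/forallP.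
Qed.

Lemma pbarA_coef n : pbarA psi n = (part_gf signed_weight n)`_n.
Proof. by rewrite coef_part_gf_weight; apply: eq_bigr => f _; rewrite prodrXr. Qed.

Lemma mult_gf_weight g n k : g 0%N = 1 ->
  mult_gf (weight g) n k = if memA k then \sum_(t < n.+1) (g t)%:P * 'X^k ^+ t else 1.
Proof.
rewrite /mult_gf /weight => g0; case: (memA k).
  by apply: eq_bigr => t _; rewrite orbT mul1r exprM.
rewrite big_ord_recl /= g0 mulr1 muln0 mulr1 big1 ?addr0 // => t _.
by rewrite mul0r mul0r.
Qed.

Lemma mult_gf_bounded alpha n k :
  mult_gf (bounded_weight alpha) n k =
  mult_gf plain_weight n k *
  \prod_(i < n.+1) (mult_gf signed_weight n k \Po 'X^(alpha.+1 * 2 ^ i))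
  %[modX n].
Proof.
rewrite !mult_gf_weight //; case: (boolP (memA k)) => [/andP[k_gt0 _] | _]; last first.
  by rewrite mul1r big1 => [|i _]; [exact: eqmodX_refl | rewrite comp_polyC].
set y : {poly int} := 'X^k.
have yM0 : y ^+ n.+1 = 0 %[modX n] by rewrite -exprM; apply: eqmodX_Xn0; rewrite leq_pmull.
have bounded_sum : \sum_(t < n.+1) ((t <= alpha)%N%:R)%:P * y ^+ t =
                   \sum_(t < n.+1 | (t < alpha.+1)%N) y ^+ t.
  rewrite [RHS]big_mkcond; apply: eq_bigr => t _.
  by rewrite ltnS; case: (t <= alpha)%N; rewrite ?mul1r ?mul0r.
have signed_sum i :
    (\sum_(t < n.+1) ((-1) ^+ t)%:P * y ^+ t) \Po 'X^(alpha.+1 * 2 ^ i) =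
    \sum_(t < n.+1) (- (y ^+ alpha.+1) ^+ (2 ^ i)) ^+ t.
  rewrite rmorph_sum; apply: eq_bigr => t _.
  rewrite /y rmorphM /= comp_polyC !rmorphXn /= comp_polyX exprNn polyCN polyC1 -!exprM.
  by congr (_ * 'X^_); lia.
have unit_sum : \sum_(t < n.+1) 1%:P * y ^+ t = \sum_(t < n.+1) y ^+ t.
  by apply: eq_bigr => t _; rewrite polyC1 mul1r.
rewrite bounded_sum unit_sum.
under [X in _ = _ * X %[modX n]]eq_bigr do rewrite signed_sum.
apply: eqmodX_trans _ (eqmodX_sym (geom_sum_mul_one_sub_eqmodX alpha.+1 yM0)) _.
apply: eqmodXM; first exact: eqmodX_refl.
apply: one_sub_eqmodX_binary_prod; rewrite -exprM.
exact: (eqmodX_expr0 _ yM0) (leq_pmull _ _).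
Qed.

Lemma part_gf_bounded alpha n :
  part_gf (bounded_weight alpha) n =
  part_gf plain_weight n *
  \prod_(i < n.+1) (part_gf signed_weight n \Po 'X^(alpha.+1 * 2 ^ i))
  %[modX n].
Proof.
apply: eqmodX_trans _ (eqmodX_prod (fun (k : 'I_n.+1) _ => mult_gf_bounded alpha n k)) _.
rewrite big_split /= exchange_big /=.
by under [X in _ = _ * X %[modX n]]eq_bigr do rewrite rmorph_prod.
Qed.

Lemma pbarA0 : pbarA psi 0 = 1.
Proof. by rewrite pbarA_coef /part_gf /mult_gf !big_ord1 weight_mult0 ?expr0 // mulr1 coefC. Qed.

Lemma part_gf_pbarA n : part_gf signed_weight n =
  \sum_(s < n.+1) (pbarA psi s)%:P * 'X^s %[modX n].
Proof.
apply: eqmodX_trans _ (eqmodX_trunc _ _) _; apply: eqmodX_sum => s _.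
rewrite pbarA_coef (part_gf_eqmodX (weight_mult0 (expr0 _)) (@weight_part0 _) (leq_ord s)) //.
Qed.

Definition gamma_gf c I L : {poly int} :=
  \prod_(i < I) \sum_(s < L) (pbarA psi s)%:P * 'X^(c * 2 ^ i * s).

Lemma Gamma_coef alpha m : Gamma psi alpha m = (gamma_gf alpha.+1 m m.+1)`_m.
Proof.
rewrite /Gamma /gamma_gf coef_prod_sum; case: eqP => [-> | _].
  under eq_bigr do rewrite !big_ord0 mul1r.
  by rewrite sumr_const card_ffun !card_ord expn0.
rewrite big_mkcond /=; apply: eq_bigr => N _; rewrite big_distrr /=.
under [X in (X == m)%N]eq_bigr do rewrite mulnA.
by case: (_ == _); rewrite ?mulr1 ?mulr0.
Qed.

Lemma gamma_gf_eqmodX {c m n} : (0 < c)%N -> (m <= n)%N ->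
  gamma_gf c n.+1 n.+1 = gamma_gf c m m.+1 %[modX m].
Proof.
move=> c_gt0 le_mn.
apply: (@eqmodX_prod_sum_narrow _ _ _ _ _ _
         (fun i s => (pbarA psi s)%:P * 'X^(c * 2 ^ i * s))) => [||i|i s big_is s_gt0].
- exact: leqW.
- by [].
- by rewrite pbarA0 muln0 mulr1.
apply/eqmodX_mull0/eqmodX_Xn0.
have le_2i_d : (2 ^ i <= c * 2 ^ i * s)%N by rewrite mulnAC leq_pmull // muln_gt0 c_gt0.
case/orP: big_is => [le_mi | lt_ms].
  exact: leq_trans (leq_ltn_trans le_mi (ltn_expl _ _)) le_2i_d.
by rewrite (leq_trans lt_ms) // leq_pmull // muln_gt0 c_gt0 expn_gt0.
Qed.

Lemma part_gf_bounded_gamma alpha n :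
  part_gf (bounded_weight alpha) n =
  part_gf plain_weight n * gamma_gf alpha.+1 n.+1 n.+1 %[modX n].
Proof.
apply: eqmodX_trans _ (part_gf_bounded alpha n) _.
apply: eqmodXM; first exact: eqmodX_refl.
apply: eqmodX_prod => i _.
rewrite (_ : \sum_(s < n.+1) _ =
  (\sum_(s < n.+1) (pbarA psi s)%:P * 'X^s) \Po 'X^(alpha.+1 * 2 ^ i)).
  by apply: eqmodX_comp; [rewrite muln_gt0 expn_gt0 | exact: part_gf_pbarA].
rewrite rmorph_sum; apply: eq_bigr => s _.
by rewrite rmorphM /= comp_polyC comp_Xn_poly -exprM.
Qed.

End PartitionsInA.

Theorem mainTheorem3 (psi : nat -> nat)
  (psi_pos : forall n : nat, (0 < n)%N -> (0 < psi n)%N)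
  (psi_inj : forall i j : nat, (0 < i)%N -> (0 < j)%N -> psi i = psi j -> i = j)
  (alpha : nat) (alpha_pos : (0 < alpha)%N) (n : nat) :
  ((pA_alpha psi alpha n)%:Z =
     \sum_(i < n.+1) (pA psi (n - i))%:Z * Gamma psi alpha i)%R.
Proof.
rewrite pA_alpha_coef (part_gf_bounded_gamma psi alpha n n (leqnn n)) coefMr.
apply: eq_bigr => i _; rewrite pA_coef Gamma_coef.
rewrite (part_gf_eqmodX (weight_mult0 psi (erefl _)) (@weight_part0 psi _) (leq_subr i n)) //.
by rewrite (gamma_gf_eqmodX psi (ltn0Sn _) (ltn_ord i : (i <= n)%N)).
Qed.
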